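(* Let $k\in\mathbb{N}$, $n>2k+8$ and $q\ge q_{JL}(k)$, and let $(y,z)$ be the functions associated with the unique global solution $v$ of $(E_v)$. Then the orbit $\{(y(t),z(t)):t\in\mathbb{R}\}$ coincides with the graph of an increasing function $z=z(y)$, and \[ \lim_{t\to+\infty}(y(t),z(t))=O_2:=\Big(\frac{q-k}{a}\tilde\lambda,\ \tilde\lambda\Big). \]
   Context: $q_{JL}(k)=k\,\dfrac{(k+1)n-2(k-1)-2\sqrt{2[(k+1)n-2k]}}{(k+1)n-2k(k+3)-2\sqrt{2[(k+1)n-2k]}}$ for $n>2k+8$ (this exceeds $q^*(k)=\frac{(n+2)k}{n-2k}$). $\tilde\lambda=\tau^k(n-2k-k\tau)$ with $\tau=\frac{2k}{q-k}$, and $a=q(n-2k)-nk$. Problem $(E_v)$ is $\big(s^{n-k}(v')^k\big)'=\tilde\lambda s^{n-1}(-v)^q$ for $s>0$, $v(0)=-1$, $v'(0)=0$, with unique global solution $v\in C^2((0,\infty))\cap C^1([0,\infty))$. With $s=e^t$ and $\frac{dv}{dt}$ the derivative of $t\mapsto v(e^t)$, $y(t)=(\frac{dv}{dt})^k e^{\frac{2k^2}{q-k}t}$, $z(t)=\tilde\lambda e^{\frac{2kq}{q-k}t}(-v(e^t))^q$; they solve $y'=z-\frac{a}{q-k}y$, $z'=\frac{2kq}{q-k}z-q\tilde\lambda^{1/q}y^{1/k}z^{1-1/q}$, whose stationary points are $O_1=(0,0)$ and $O_2$. *)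

From Stdlib Require Import Reals.
Open Scope R_scope.

Definition qJL (k n : nat) : R :=
  let K := INR k in let N := INR n in
  K * (((K + 1) * N - 2 * (K - 1) - 2 * sqrt (2 * ((K + 1) * N - 2 * K)))
       / ((K + 1) * N - 2 * K * (K + 3) - 2 * sqrt (2 * ((K + 1) * N - 2 * K)))).

Definition tau (k : nat) (q : R) : R := 2 * INR k / (q - INR k).

Definition lamt (k n : nat) (q : R) : R :=
  (tau k q) ^ k * (INR n - 2 * INR k - INR k * tau k q).

Definition acoef (k n : nat) (q : R) : R := q * (INR n - 2 * INR k) - INR n * INR k.

(* v is a global solution of (E_v) with first and second derivatives dv, d2v:
   v in C^2((0,oo)) /\ C^1([0,oo)), v(0) = -1, v'(0) = 0, and
   (s^(n-k) (v')^k)' = lamt s^(n-1) (-v)^q for s > 0.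
   Since (-v)^q appears with real q, v < 0 on [0,oo) is part of being a solution. *)
Definition is_global_solution (k n : nat) (q : R) (v dv d2v : R -> R) : Prop :=
  (forall s, 0 < s -> derivable_pt_lim v s (dv s)) /\
  (forall s, 0 < s -> derivable_pt_lim dv s (d2v s)) /\
  (forall s, 0 < s -> continuity_pt d2v s) /\
  (* C^1 up to s = 0: right derivative of v at 0 is dv 0, dv right-continuous at 0 *)
  limit1_in (fun s => (v s - v 0) / s) (fun s => 0 < s) (dv 0) 0 /\
  limit1_in dv (fun s => 0 < s) (dv 0) 0 /\
  v 0 = -1 /\ dv 0 = 0 /\
  (forall s, 0 <= s -> v s < 0) /\
  (forall s, 0 < s ->
     derivable_pt_lim (fun r => r ^ (n - k) * (dv r) ^ k) s
       (lamt k n q * s ^ (n - 1) * Rpower (- v s) q)).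

(* y(t) = (d/dt v(e^t))^k e^{2k^2 t/(q-k)}, where d/dt v(e^t) = e^t v'(e^t). *)
Definition yfun (k : nat) (q : R) (dv : R -> R) (t : R) : R :=
  (exp t * dv (exp t)) ^ k * exp (2 * INR k ^ 2 / (q - INR k) * t).

Definition zfun (k n : nat) (q : R) (v : R -> R) (t : R) : R :=
  lamt k n q * exp (2 * INR k * q / (q - INR k) * t) * Rpower (- v (exp t)) q.

Definition lim_pinfty (f : R -> R) (l : R) : Prop :=
  forall eps, 0 < eps -> exists T, forall t, T < t -> Rabs (f t - l) < eps.

(* Put s = e^t, W(s) = s^(n-k) v'(s)^k, A = n - 2k - k tau, B = q tau and
     eta = ln W(e^t) - A t - k ln tau,   zeta = B t + q ln (-v(e^t)),
   so that y = tau^k e^eta and z = lam e^zeta.  The equation reads W' = lam s^(n-1) (-v)^q > 0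
   with W(0+) = 0, so v' has a constant sign and (eta, zeta) solves
     eta' = A (e^(zeta - eta) - 1),   zeta' = B (1 -+ e^(eta/k - zeta/q)),
   with - when v' > 0 and + when v' < 0.  With + the orbit stays above a line
   eta = gam zeta + C, which forces zeta to blow up in finite time; hence v' > 0.  With -,
   the bounds lam s^n (-v)^q / n <= W <= lam s^n / n put the orbit, near t = -oo, in the cone
   eta < zeta < th eta with th = (A + tau) / (2 A); the cone is invariant because
   (A - tau)^2 >= 8 A, which is the condition q >= q_JL.  In the cone eta and zeta increase
   and tend to 0, so y and z increase together and (y, z) tends to (tau^k, lam) = O_2. *)

From Stdlib Require Import Reals Lra Lia Psatz Classical ClassicalEpsilon.
Open Scope R_scope.

Lemma derivable_pt_lim_eq_deriv (f : R -> R) x l l' :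
  l = l' -> derivable_pt_lim f x l -> derivable_pt_lim f x l'.
Proof. now intros ->. Qed.

Lemma derivable_pt_lim_exp_comp (f : R -> R) x l : derivable_pt_lim f x l ->
  derivable_pt_lim (fun t => exp (f t)) x (exp (f x) * l).
Proof. intros H. apply (derivable_pt_lim_comp f exp); [exact H | apply derivable_pt_lim_exp]. Qed.

Lemma derivable_pt_lim_ln_comp (f : R -> R) x l : 0 < f x -> derivable_pt_lim f x l ->
  derivable_pt_lim (fun t => ln (f t)) x (/ f x * l).
Proof. intros Hpos H. apply (derivable_pt_lim_comp f ln); [exact H | now apply derivable_pt_lim_ln]. Qed.

Lemma derivable_pt_lim_continuity_pt (f : R -> R) x l :
  derivable_pt_lim f x l -> continuity_pt f x.
Proof. intros H. apply derivable_continuous_pt. now exists l. Qed.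

Lemma continuity_pt_pos_nbhd (f : R -> R) x : continuity_pt f x -> 0 < f x ->
  exists d, 0 < d /\ forall r, Rabs (r - x) < d -> 0 < f r.
Proof.
  intros Hc Hpos. destruct (Hc (f x) Hpos) as [d [Hd Hnear]].
  exists d; split; [exact Hd|]. intros r Hr.
  destruct (Req_dec r x) as [->|Hne]; [exact Hpos|].
  assert (Hfr : Rabs (f r - f x) < f x) by (apply (Hnear r); repeat split; auto).
  apply Rabs_def2 in Hfr. lra.
Qed.

Lemma derivable_pt_lim_sign_change (f : R -> R) x l :
  derivable_pt_lim f x l -> 0 < l -> f x = 0 ->
  exists d, 0 < d /\ (forall r, x - d < r < x -> f r < 0) /\
                     (forall r, x < r < x + d -> 0 < f r).
Proof.
  intros Hd Hl Hfx. destruct (Hd (l / 2) ltac:(lra)) as [[d Hdpos] Hquot].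
  assert (Hslope : forall r, r <> x -> Rabs (r - x) < d -> l / 2 < f r / (r - x)).
  { intros r Hne Hr. specialize (Hquot (r - x) ltac:(lra) Hr).
    replace (x + (r - x)) with r in Hquot by ring. rewrite Hfx, Rminus_0_r in Hquot.
    apply Rabs_def2 in Hquot. lra. }
  exists d. split; [exact Hdpos | split]; intros r Hr.
  - specialize (Hslope r ltac:(lra) ltac:(rewrite Rabs_left; lra)).
    replace (f r) with (f r / (r - x) * (r - x)) by (field; lra). nra.
  - specialize (Hslope r ltac:(lra) ltac:(rewrite Rabs_right; lra)).
    replace (f r) with (f r / (r - x) * (r - x)) by (field; lra). nra.
Qed.

Lemma upcrossing_not_from_above (g : R -> R) m l :
  derivable_pt_lim g m l -> 0 < l -> g m = 0 -> ~ (forall r, r < m -> 0 < g r).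
Proof.
  intros Hd Hl Hm Hbefore.
  destruct (derivable_pt_lim_sign_change g m l Hd Hl Hm) as [d [Hd0 [Hleft _]]].
  specialize (Hleft (m - d / 2) ltac:(lra)). specialize (Hbefore (m - d / 2) ltac:(lra)). lra.
Qed.

Lemma lt_of_derivable_pt_lim_pos (f df : R -> R) a b : a < b ->
  (forall x, a <= x <= b -> derivable_pt_lim f x (df x)) ->
  (forall x, a <= x <= b -> 0 < df x) -> f a < f b.
Proof.
  intros Hab Hd Hpos. destruct (MVT_cor2 f df a b Hab Hd) as [c [Ec Hc]].
  assert (0 < df c * (b - a)) by (apply Rmult_lt_0_compat; [apply Hpos|]; lra). lra.
Qed.

Lemma le_of_derivable_pt_lim_nonneg (f df : R -> R) a b : a <= b ->
  (forall x, a <= x <= b -> derivable_pt_lim f x (df x)) ->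
  (forall x, a <= x <= b -> 0 <= df x) -> f a <= f b.
Proof.
  intros Hab Hd Hpos. destruct (Req_dec a b) as [->|Hne]; [lra|].
  destruct (MVT_cor2 f df a b ltac:(lra) Hd) as [c [Ec Hc]].
  assert (0 <= df c * (b - a)) by (apply Rmult_le_pos; [apply Hpos|]; lra). lra.
Qed.

Lemma exp_mult_INR (n : nat) x : exp (INR n * x) = exp x ^ n.
Proof.
  induction n as [|n IH]; [rewrite Rmult_0_l; apply exp_0|].
  rewrite S_INR, Rmult_plus_distr_r, exp_plus, IH, Rmult_1_l. simpl. ring.
Qed.

Lemma exp_le_compat x y : x <= y -> exp x <= exp y.
Proof.
  intros H. destruct (Rle_lt_or_eq_dec _ _ H) as [Hlt| ->]; [|lra].
  left; now apply exp_increasing.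
Qed.

Lemma exp_sub1_le x : 0 <= x -> exp x - 1 <= x * exp x.
Proof.
  intros Hx. pose proof (exp_ineq1_le (- x)) as Hneg. pose proof (exp_pos x).
  assert (exp (- x) * exp x = 1) by (rewrite <- exp_plus, Rplus_opp_l; apply exp_0).
  nra.
Qed.

Lemma pow_le_one x (m : nat) : 0 <= x <= 1 -> x ^ m <= 1.
Proof. intros Hx. rewrite <- (pow1 m). now apply pow_incr. Qed.

Lemma pow_le_self x (m : nat) : 0 <= x <= 1 -> (1 <= m)%nat -> x ^ m <= x.
Proof.
  intros Hx Hm. destruct m as [|m]; [lia|]. simpl.
  pose proof (pow_le_one x m Hx). nra.
Qed.

Lemma Rpower_lt_one u p : 0 < u < 1 -> 0 < p -> Rpower u p < 1.
Proof.
  intros Hu Hp. unfold Rpower. rewrite <- exp_0. apply exp_increasing.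
  assert (ln u < 0) by (rewrite <- ln_1; apply ln_increasing; lra). nra.
Qed.

Definition vanishes_at_0plus (f : R -> R) : Prop :=
  forall eps, 0 < eps -> exists d, 0 < d /\ forall x, 0 < x < d -> Rabs (f x) < eps.

Lemma vanishes_at_0plus_minus (f g : R -> R) :
  vanishes_at_0plus f -> vanishes_at_0plus g -> vanishes_at_0plus (fun x => f x - g x).
Proof.
  intros Hf Hg eps He.
  destruct (Hf (eps / 2) ltac:(lra)) as [d1 [Hd1 Hf1]].
  destruct (Hg (eps / 2) ltac:(lra)) as [d2 [Hd2 Hg2]].
  exists (Rmin d1 d2). split; [now apply Rmin_glb_lt|]. intros x Hx.
  pose proof (Rmin_l d1 d2). pose proof (Rmin_r d1 d2).
  specialize (Hf1 x ltac:(lra)). specialize (Hg2 x ltac:(lra)).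
  pose proof (Rabs_triang (f x) (- g x)). rewrite Rabs_Ropp in *. unfold Rminus. lra.
Qed.

Lemma vanishes_at_0plus_scal_pow c (m : nat) : (1 <= m)%nat ->
  vanishes_at_0plus (fun x => c * x ^ m).
Proof.
  intros Hm eps He. pose proof (Rabs_pos c).
  exists (Rmin 1 (eps / (Rabs c + 1))).
  split; [apply Rmin_glb_lt; [lra|apply Rdiv_lt_0_compat; lra]|]. intros x Hx.
  pose proof (Rmin_l 1 (eps / (Rabs c + 1))). pose proof (Rmin_r 1 (eps / (Rabs c + 1))).
  assert (Hxm : x ^ m <= x) by (apply pow_le_self; [lra|exact Hm]).
  pose proof (pow_le x m ltac:(lra)).
  assert (Hcx : (Rabs c + 1) * x < eps).
  { apply (Rmult_lt_reg_r (/ (Rabs c + 1))); [apply Rinv_0_lt_compat; lra|].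
    replace ((Rabs c + 1) * x * / (Rabs c + 1)) with x by (field; lra). lra. }
  rewrite Rabs_mult, (Rabs_right (x ^ m)) by lra. nra.
Qed.

Lemma vanishing_at_0plus_deriv_nonneg (f df : R -> R) s : 0 < s ->
  (forall x, 0 < x <= s -> derivable_pt_lim f x (df x)) ->
  (forall x, 0 < x <= s -> 0 <= df x) ->
  vanishes_at_0plus f -> 0 <= f s.
Proof.
  intros Hs Hd Hpos Hlim. destruct (Rlt_or_le (f s) 0) as [Hneg|]; [exfalso|assumption].
  destruct (Hlim (- f s) ltac:(lra)) as [d [Hd0 Hnear]].
  set (x := Rmin (d / 2) (s / 2)).
  assert (Hx : 0 < x < d /\ x < s) by (unfold x; apply Rmin_case_strong; intros; lra).
  specialize (Hnear x ltac:(lra)). apply Rabs_def2 in Hnear.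
  assert (f x <= f s) by (apply (le_of_derivable_pt_lim_nonneg f df); [lra| |]; intros; [apply Hd|apply Hpos]; lra).
  lra.
Qed.

Lemma lim_pinfty_continuous_comp (f g : R -> R) l :
  lim_pinfty g l -> continuity_pt f l -> lim_pinfty (fun t => f (g t)) (f l).
Proof.
  intros Hg Hf eps He. destruct (Hf eps He) as [d [Hd Hnear]].
  destruct (Hg d Hd) as [T HT]. exists T. intros t Ht.
  destruct (Req_dec (g t) l) as [E|E].
  - rewrite E, Rminus_diag, Rabs_R0. exact He.
  - apply (Hnear (g t)). split; [split; [exact I|congruence]|now apply HT].
Qed.

Lemma lim_pinfty_ext (f g : R -> R) l :
  (forall t, f t = g t) -> lim_pinfty f l -> lim_pinfty g l.
Proof.
  intros E Hf eps He. destruct (Hf eps He) as [T HT]. exists T. intros t Ht.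
  rewrite <- E. now apply HT.
Qed.

Lemma lim_pinfty_scal_exp c (g : R -> R) :
  lim_pinfty g 0 -> lim_pinfty (fun t => c * exp (g t)) c.
Proof.
  intros Hg. pose proof (lim_pinfty_continuous_comp (fun x => c * exp x) g 0 Hg) as H.
  cbv beta in H. rewrite exp_0, Rmult_1_r in H. apply H.
  apply (derivable_pt_lim_continuity_pt _ _ (c * exp 0)).
  apply derivable_pt_lim_scal, derivable_pt_lim_exp.
Qed.

Lemma increasing_graph (y z : R -> R) :
  (forall t1 t2, t1 < t2 -> y t1 < y t2) -> (forall t1 t2, t1 < t2 -> z t1 < z t2) ->
  exists f : R -> R, (forall t, z t = f (y t)) /\
    (forall t1 t2, y t1 < y t2 -> f (y t1) < f (y t2)).
Proof.
  intros Hy Hz.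
  assert (Hlt : forall t1 t2, y t1 < y t2 -> t1 < t2).
  { intros t1 t2 H. destruct (Rlt_or_le t1 t2) as [|Hle]; [assumption|].
    destruct (Rle_lt_or_eq_dec _ _ Hle) as [Hgt| ->]; [specialize (Hy _ _ Hgt)|]; lra. }
  set (inv := fun w => epsilon (inhabits 0) (fun t => y t = w)).
  assert (Hinv : forall t, inv (y t) = t).
  { intros t. assert (Hspec : y (inv (y t)) = y t)
      by (apply (epsilon_spec (inhabits 0) (fun s => y s = y t)); now exists t).
    destruct (Rtotal_order (inv (y t)) t) as [Hl|[E|Hg]]; [|exact E|];
      [specialize (Hy _ _ Hl)|specialize (Hy _ _ Hg)]; lra. }
  exists (fun w => z (inv w)). split.
  - intros t. now rewrite Hinv.
  - intros t1 t2 H. rewrite !Hinv. now apply Hz, Hlt.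
Qed.

Lemma last_zero_before_neg (g : R -> R) t0 t1 :
  (forall t, continuity_pt g t) -> t0 <= t1 -> 0 <= g t0 -> g t1 < 0 ->
  exists m, t0 <= m < t1 /\ g m = 0 /\ forall r, m < r <= t1 -> g r < 0.
Proof.
  intros Hc H01 Hg0 Hg1.
  set (E := fun t => t0 <= t <= t1 /\ 0 <= g t).
  destruct (completeness E) as [m [Hub Hlub]].
  { exists t1. intros t [Ht _]. lra. }
  { exists t0. split; [lra|exact Hg0]. }
  assert (Hm0 : t0 <= m) by (apply Hub; split; [lra|exact Hg0]).
  assert (Hm1 : m <= t1) by (apply Hlub; intros t [Ht _]; lra).
  assert (Hright : forall r, m < r <= t1 -> g r < 0).
  { intros r Hr. destruct (Rlt_or_le (g r) 0) as [|Hr0]; [assumption|].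
    assert (r <= m) by (apply Hub; split; [lra|exact Hr0]). lra. }
  assert (Hgm : 0 <= g m).
  { destruct (Rlt_or_le (g m) 0) as [Hneg|]; [exfalso|assumption].
    destruct (continuity_pt_pos_nbhd (fun t => - g t) m) as [d [Hd Hnear]].
    { now apply continuity_pt_opp. } { lra. }
    destruct (classic (exists t, E t /\ m - d < t)) as [[t [[Ht Hgt] Htd]]|Hno].
    - assert (t <= m) by (apply Hub; split; assumption).
      specialize (Hnear t ltac:(apply Rabs_def1; lra)). lra.
    - assert (m <= m - d); [|lra].
      apply Hlub. intros t Et. apply Rnot_lt_le. intros Ht. apply Hno. now exists t. }
  exists m. destruct (Rle_lt_or_eq_dec _ _ Hgm) as [Hpos|Hzero].
  - exfalso. assert (Hmt1 : m < t1) by (destruct (Req_dec m t1); subst; lra).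
    destruct (continuity_pt_pos_nbhd g m (Hc m) Hpos) as [d [Hd Hnear]].
    set (r := Rmin (m + d / 2) t1).
    assert (Hr : m < r <= t1) by (unfold r; apply Rmin_case_strong; intros; lra).
    specialize (Hright r Hr).
    assert (0 < g r) by (apply Hnear; unfold r; apply Rabs_def1; apply Rmin_case_strong; intros; lra).
    lra.
  - split; [split; [exact Hm0|] | split; [now symmetry|exact Hright]].
    destruct (Req_dec m t1) as [->|]; [lra|lra].
Qed.

Lemma first_exit_time (g1 g2 : R -> R) t0 t1 :
  (forall t, continuity_pt g1 t) -> (forall t, continuity_pt g2 t) ->
  (forall t, t <= t0 -> 0 < g1 t /\ 0 < g2 t) -> ~ (0 < g1 t1 /\ 0 < g2 t1) ->
  exists m, (forall r, r < m -> 0 < g1 r /\ 0 < g2 r) /\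
    0 <= g1 m /\ 0 <= g2 m /\ (g1 m = 0 \/ g2 m = 0).
Proof.
  intros C1 C2 Hbefore Hexit.
  assert (Ht01 : t0 < t1) by (apply Rnot_le_lt; intros Ht; now apply Hexit, Hbefore).
  set (E := fun t => t <= t1 /\ forall r, r <= t -> 0 < g1 r /\ 0 < g2 r).
  destruct (completeness E) as [m [Hub Hlub]].
  { exists t1. intros t [Ht _]. exact Ht. }
  { exists t0. split; [lra|exact Hbefore]. }
  assert (Hm1 : m <= t1) by (apply Hlub; intros t [Ht _]; exact Ht).
  assert (Hleft : forall r, r < m -> 0 < g1 r /\ 0 < g2 r).
  { intros r Hr. destruct (classic (exists t, E t /\ r < t)) as [[t [[_ Et] Ht]]|Hno].
    - apply Et. lra.
    - assert (m <= r); [|lra].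
      apply Hlub. intros t Et. apply Rnot_lt_le. intros Ht. apply Hno. now exists t. }
  assert (Hclosed : forall g : R -> R, (forall t, continuity_pt g t) ->
            (forall r, r < m -> 0 < g r) -> 0 <= g m).
  { intros g Cg Hg. destruct (Rlt_or_le (g m) 0) as [Hneg|]; [exfalso|assumption].
    destruct (continuity_pt_pos_nbhd (fun t => - g t) m) as [d [Hd Hnear]].
    { now apply continuity_pt_opp. } { lra. }
    specialize (Hnear (m - d / 2) ltac:(apply Rabs_def1; lra)).
    specialize (Hg (m - d / 2) ltac:(lra)). lra. }
  assert (G1 : 0 <= g1 m) by (apply Hclosed; [exact C1|intros r Hr; now apply Hleft]).
  assert (G2 : 0 <= g2 m) by (apply Hclosed; [exact C2|intros r Hr; now apply Hleft]).
  exists m. split; [exact Hleft|split; [exact G1|split; [exact G2|]]].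
  destruct (Req_dec (g1 m) 0) as [|Hne1]; [now left|].
  destruct (Req_dec (g2 m) 0) as [|Hne2]; [now right|]. exfalso.
  destruct (Req_dec m t1) as [->|Hmt1]; [apply Hexit; lra|].
  destruct (continuity_pt_pos_nbhd g1 m (C1 m) ltac:(lra)) as [d1 [Hd1 Hnear1]].
  destruct (continuity_pt_pos_nbhd g2 m (C2 m) ltac:(lra)) as [d2 [Hd2 Hnear2]].
  pose proof (Rmin_l d1 d2). pose proof (Rmin_r d1 d2). set (d := Rmin d1 d2) in *.
  assert (0 < d) by now apply Rmin_glb_lt.
  set (r := Rmin (m + d / 2) t1).
  assert (Hr : m < r <= t1) by (unfold r; apply Rmin_case_strong; intros; lra).
  assert (r <= m); [|lra].
  apply Hub. split; [lra|]. intros x Hx. destruct (Rlt_or_le x m) as [|Hxm]; [now apply Hleft|].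
  assert (r <= m + d / 2) by (unfold r; apply Rmin_l).
  split; [apply Hnear1|apply Hnear2]; apply Rabs_def1; lra.
Qed.

(** * The planar system with the plus sign has no entire solution *)

Section PlusSystem.

Variables (eta zeta : R -> R) (A B k1 k2 : R).
Hypotheses (HA : 0 < A) (HB : 0 < B) (Hk2 : 0 < k2) (Hk12 : k2 < k1)
  (Deta : forall t, derivable_pt_lim eta t (A * (exp (zeta t - eta t) - 1)))
  (Dzeta : forall t, derivable_pt_lim zeta t (B * (1 + exp (k1 * eta t - k2 * zeta t)))).

(* Along the line eta = gam * zeta + C the two exponents grow like exp (ep * zeta). *)
Let gam := (1 + k2) / (1 + k1).
Let ep := (k1 - k2) / (1 + k1).

Let ep_pos : 0 < ep.
Proof. unfold ep. apply Rdiv_lt_0_compat; lra. Qed.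

Let one_sub_gam : 1 - gam = ep.
Proof. unfold gam, ep. field. lra. Qed.

Let k1_gam_sub_k2 : k1 * gam - k2 = ep.
Proof. unfold gam, ep. field. lra. Qed.

Let gam_bounds : 0 < gam < 1.
Proof. pose proof ep_pos. pose proof one_sub_gam. split; [unfold gam; apply Rdiv_lt_0_compat|]; lra. Qed.

Lemma plus_zeta_eventually_nonneg : exists t0, forall t, t0 <= t -> 0 <= zeta t.
Proof.
  exists (Rabs (zeta 0) / B). intros t Ht.
  assert (Ht0 : 0 <= Rabs (zeta 0) / B) by (apply Rle_mult_inv_pos; [apply Rabs_pos|lra]).
  assert (Hlin : zeta 0 + B * t <= zeta t).
  { destruct (Rle_lt_or_eq_dec 0 t ltac:(lra)) as [Htpos| <-]; [|lra].
    destruct (MVT_cor2 zeta (fun t => B * (1 + exp (k1 * eta t - k2 * zeta t))) 0 t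
      Htpos (fun c _ => Dzeta c)) as [c [Ec _]].
    pose proof (exp_pos (k1 * eta c - k2 * zeta c)).
    assert (0 <= B * exp (k1 * eta c - k2 * zeta c) * t) by (repeat apply Rmult_le_pos; lra).
    nra. }
  assert (B * (Rabs (zeta 0) / B) = Rabs (zeta 0)) by (field; lra).
  pose proof (Rle_abs (- zeta 0)) as Habs. rewrite Rabs_Ropp in Habs. nra.
Qed.

Lemma plus_barrier_transversal C m :
  C <= ln (A / (A + 2 * B)) - 1 -> 0 <= zeta m -> eta m = gam * zeta m + C ->
  0 < A * (exp (zeta m - eta m) - 1) - gam * (B * (1 + exp (k1 * eta m - k2 * zeta m))).
Proof.
  intros HC Hz He.
  assert (HAB : 0 < A / (A + 2 * B)) by (apply Rdiv_lt_0_compat; lra).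
  assert (Hln : ln (A / (A + 2 * B)) < 0).
  { rewrite <- ln_1. apply ln_increasing; [exact HAB|].
    apply (Rmult_lt_reg_r (A + 2 * B)); [lra|]. field_simplify; lra. }
  assert (HeC : A + 2 * B < A * exp (- C)).
  { assert (Hle : exp (1 - ln (A / (A + 2 * B))) <= exp (- C)) by (apply exp_le_compat; lra).
    unfold Rminus in Hle. rewrite exp_plus, exp_Ropp, exp_ln in Hle by exact HAB.
    replace (/ (A / (A + 2 * B))) with ((A + 2 * B) / A) in Hle by (field; lra).
    pose proof (exp_ineq1 1 ltac:(lra)).
    assert ((A + 2 * B) / A * A = A + 2 * B) by (field; lra).
    assert (0 < (A + 2 * B) / A) by (apply Rdiv_lt_0_compat; lra). nra. }
  set (X := exp (ep * zeta m)).
  assert (HX : 1 <= X) by (unfold X; rewrite <- exp_0; apply exp_le_compat; pose proof ep_pos; nra).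
  assert (E1 : exp (zeta m - eta m) = X * exp (- C)).
  { unfold X. rewrite <- exp_plus, <- one_sub_gam, He. f_equal. ring. }
  assert (E2 : exp (k1 * eta m - k2 * zeta m) <= X).
  { replace (k1 * eta m - k2 * zeta m) with (ep * zeta m + k1 * C)
      by (rewrite He, <- k1_gam_sub_k2; ring).
    rewrite exp_plus. fold X.
    assert (exp (k1 * C) <= 1) by (rewrite <- exp_0; apply exp_le_compat; nra).
    pose proof (exp_pos (k1 * C)). nra. }
  rewrite E1. pose proof (exp_pos (k1 * eta m - k2 * zeta m)). pose proof gam_bounds.
  set (F := B * (1 + exp (k1 * eta m - k2 * zeta m))).
  assert (0 < F) by (unfold F; apply Rmult_lt_0_compat; lra).
  assert (gam * F <= F) by nra.
  assert (F <= B * (1 + X)) by (unfold F; nra).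
  nra.
Qed.

Lemma plus_barrier t0 : (forall t, t0 <= t -> 0 <= zeta t) ->
  exists C, forall t, t0 <= t -> C <= eta t - gam * zeta t.
Proof.
  intros Hz. set (C := Rmin (eta t0 - gam * zeta t0) (ln (A / (A + 2 * B)) - 1)).
  exists C. intros t Ht.
  set (g := fun t => eta t - gam * zeta t - C).
  assert (Dg : forall t, derivable_pt_lim g t
     (A * (exp (zeta t - eta t) - 1) - gam * (B * (1 + exp (k1 * eta t - k2 * zeta t)))
      - 0)).
  { intros s. apply derivable_pt_lim_minus; [|apply derivable_pt_lim_const].
    apply derivable_pt_lim_minus; [apply Deta|apply derivable_pt_lim_scal, Dzeta]. }
  destruct (Rlt_or_le (g t) 0) as [Hneg|]; [exfalso|unfold g in *; lra].
  destruct (last_zero_before_neg g t0 t) as [m [Hm [Hgm Hafter]]].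
  - intros s. exact (derivable_pt_lim_continuity_pt _ _ _ (Dg s)).
  - exact Ht.
  - unfold g, C. pose proof (Rmin_l (eta t0 - gam * zeta t0) (ln (A / (A + 2 * B)) - 1)). lra.
  - exact Hneg.
  - assert (Hcross : 0 < A * (exp (zeta m - eta m) - 1)
        - gam * (B * (1 + exp (k1 * eta m - k2 * zeta m))) - 0).
    { rewrite Rminus_0_r. apply (plus_barrier_transversal C).
      - apply Rmin_r.
      - apply Hz. lra.
      - unfold g in Hgm. lra. }
    destruct (derivable_pt_lim_sign_change g m _ (Dg m) Hcross Hgm) as [d [Hd [_ Hright]]].
    set (r := Rmin (m + d / 2) t).
    assert (Hr : m < r <= t) by (unfold r; apply Rmin_case_strong; intros; lra).
    specialize (Hafter r Hr).
    assert (0 < g r) by (apply Hright; unfold r; apply Rmin_case_strong; intros; lra).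
    lra.
Qed.

(* Above the barrier zeta' >= B exp (k1 C) exp (ep zeta): finite-time blow-up, seen on exp (- ep zeta). *)
Theorem plus_system_no_entire_solution : False.
Proof.
  destruct plus_zeta_eventually_nonneg as [t0 Hz].
  destruct (plus_barrier t0 Hz) as [C HC].
  pose proof ep_pos.
  set (mu := ep * B * exp (k1 * C)).
  assert (Hmu : 0 < mu) by (unfold mu; pose proof (exp_pos (k1 * C)); apply Rmult_lt_0_compat; nra).
  set (phi := fun t => exp (- ep * zeta t)).
  set (dphi := fun t => exp (- ep * zeta t) * (- ep * (B * (1 + exp (k1 * eta t - k2 * zeta t))))).
  assert (Dphi : forall t, derivable_pt_lim phi t (dphi t)).
  { intros t. apply (derivable_pt_lim_exp_comp (fun t => - ep * zeta t)).
    apply derivable_pt_lim_scal, Dzeta. }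
  assert (Hdphi : forall t, t0 <= t -> dphi t <= - mu).
  { intros t Ht. specialize (HC t Ht).
    assert (Hexp : exp (ep * zeta t) * exp (k1 * C) <= exp (k1 * eta t - k2 * zeta t)).
    { rewrite <- exp_plus. apply exp_le_compat. rewrite <- k1_gam_sub_k2. nra. }
    assert (Einv : exp (- ep * zeta t) * exp (ep * zeta t) = 1)
      by (rewrite <- exp_plus; replace (- ep * zeta t + ep * zeta t) with 0 by ring; apply exp_0).
    pose proof (exp_pos (- ep * zeta t)). pose proof (exp_pos (k1 * C)).
    unfold dphi, mu.
    assert (exp (- ep * zeta t) * (ep * B) * (exp (ep * zeta t) * exp (k1 * C))
            <= exp (- ep * zeta t) * (ep * B) * exp (k1 * eta t - k2 * zeta t)).
    { apply Rmult_le_compat_l; [|exact Hexp]. apply Rmult_le_pos; nra. }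
    replace (exp (- ep * zeta t) * (ep * B) * (exp (ep * zeta t) * exp (k1 * C)))
      with ((exp (- ep * zeta t) * exp (ep * zeta t)) * (ep * B * exp (k1 * C))) in * by ring.
    rewrite Einv in *.
    assert (0 <= exp (- ep * zeta t) * (ep * B)) by (apply Rmult_le_pos; nra).
    replace (exp (- ep * zeta t) * (- ep * (B * (1 + exp (k1 * eta t - k2 * zeta t)))))
      with (- (exp (- ep * zeta t) * (ep * B))
            - exp (- ep * zeta t) * (ep * B) * exp (k1 * eta t - k2 * zeta t)) by ring.
    lra. }
  set (t2 := t0 + phi t0 / mu + 1).
  assert (Hphi0 : 0 <= phi t0 / mu) by (apply Rle_mult_inv_pos; [left; apply exp_pos|lra]).
  destruct (MVT_cor2 phi dphi t0 t2 ltac:(unfold t2; lra) (fun c _ => Dphi c)) as [c [Ec Hc]].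
  specialize (Hdphi c ltac:(lra)).
  assert (mu * (t2 - t0) = phi t0 + mu) by (unfold t2; field; lra).
  assert (0 < phi t2) by apply exp_pos.
  nra.
Qed.

End PlusSystem.

(** * The planar system with the minus sign: an invariant cone *)

Section MinusSystem.

Variables (eta zeta : R -> R) (A B k1 k2 th : R).
Hypotheses (HA : 0 < A) (HB : 0 < B) (Hk2 : 0 < k2) (Hk12 : k2 < k1)
  (Hth0 : 0 < th) (Hth1 : th < 1)
  (Deta : forall t, derivable_pt_lim eta t (A * (exp (zeta t - eta t) - 1)))
  (Dzeta : forall t, derivable_pt_lim zeta t (B * (1 - exp (k1 * eta t - k2 * zeta t)))).

Lemma minus_rate_bound e z M0 : e <= z <= th * e -> - M0 <= e ->
  A * (exp (z - e) - 1) + B * (1 - exp (k1 * e - k2 * z))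
  <= (A * exp M0 + B * k1) * (- e - z).
Proof.
  intros [Hez Hzth] HM0.
  assert (He : e <= 0) by nra. assert (Hz : z <= 0) by nra.
  assert (Hexp : exp (z - e) - 1 <= (z - e) * exp M0).
  { pose proof (exp_sub1_le (z - e) ltac:(lra)).
    assert (exp (z - e) <= exp M0) by (apply exp_le_compat; lra). nra. }
  assert (Hlin : 1 - exp (k1 * e - k2 * z) <= k1 * (- e - z)).
  { pose proof (exp_ineq1_le (k1 * e - k2 * z)). nra. }
  pose proof (exp_pos M0).
  assert ((z - e) * exp M0 <= (- e - z) * exp M0) by (apply Rmult_le_compat_r; lra).
  nra.
Qed.

Section Exit.

Variable m : R.
Hypothesis Hbefore : forall r, r < m -> eta r < zeta r /\ zeta r < th * eta r.

Lemma minus_no_exit_diagonal : zeta m = eta m -> eta m < 0 -> False.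
Proof.
  intros Hdiag Hneg.
  apply (upcrossing_not_from_above (fun t => zeta t - eta t) m
    (B * (1 - exp (k1 * eta m - k2 * zeta m)) - A * (exp (zeta m - eta m) - 1))).
  - apply derivable_pt_lim_minus; [apply Dzeta|apply Deta].
  - rewrite Hdiag, Rminus_diag, exp_0.
    replace (k1 * eta m - k2 * eta m) with ((k1 - k2) * eta m) by ring.
    assert (exp ((k1 - k2) * eta m) < 1) by (rewrite <- exp_0; apply exp_increasing; nra).
    nra.
  - lra.
  - intros r Hr. specialize (Hbefore r Hr). lra.
Qed.

Lemma minus_no_exit_ray : B * (k1 - th * k2) <= A * th * (1 - th) ->
  zeta m = th * eta m -> eta m < 0 -> False.
Proof.
  intros Hcond Hray Hneg.
  apply (upcrossing_not_from_above (fun t => th * eta t - zeta t) m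
    (th * (A * (exp (zeta m - eta m) - 1)) - B * (1 - exp (k1 * eta m - k2 * zeta m)))).
  - apply derivable_pt_lim_minus; [apply derivable_pt_lim_scal, Deta|apply Dzeta].
  - set (s := - eta m).
    replace (zeta m - eta m) with ((1 - th) * s) by (unfold s; lra).
    replace (k1 * eta m - k2 * zeta m) with (- ((k1 - th * k2) * s))
      by (unfold s; rewrite Hray; ring).
    pose proof (exp_ineq1 ((1 - th) * s) ltac:(unfold s; nra)).
    pose proof (exp_ineq1_le (- ((k1 - th * k2) * s))).
    assert (th * A * (exp ((1 - th) * s) - 1) > th * A * ((1 - th) * s))
      by (apply Rmult_gt_compat_l; nra).
    assert (B * (1 - exp (- ((k1 - th * k2) * s))) <= B * ((k1 - th * k2) * s)) by nra.
    assert (B * ((k1 - th * k2) * s) <= A * th * (1 - th) * s) by (unfold s; nra).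
    nra.
  - lra.
  - intros r Hr. specialize (Hbefore r Hr). lra.
Qed.

(* Gronwall: by minus_rate_bound, (- eta - zeta) exp (L t) is nondecreasing on [m - 1, m]. *)
Lemma minus_no_exit_origin : eta m = 0 -> zeta m = 0 -> False.
Proof.
  intros He Hz. set (t2 := m - 1).
  assert (Hcone : forall t, t2 <= t <= m -> eta t <= zeta t <= th * eta t).
  { intros t [Ht Htm]. destruct (Rle_lt_or_eq_dec _ _ Htm) as [Hlt| ->].
    - destruct (Hbefore t Hlt); lra.
    - rewrite He, Hz, Rmult_0_r; lra. }
  assert (Hrise : forall t, t2 <= t <= m -> eta t2 <= eta t).
  { intros t Ht. apply (le_of_derivable_pt_lim_nonneg eta (fun t => A * (exp (zeta t - eta t) - 1)));
      [lra|intros; apply Deta|].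
    intros x Hx. destruct (Hcone x ltac:(lra)).
    assert (1 <= exp (zeta x - eta x)) by (rewrite <- exp_0; apply exp_le_compat; lra). nra. }
  set (L := A * exp (- eta t2) + B * k1).
  set (D := fun t => (- eta t - zeta t) * exp (L * t)).
  set (dD := fun t => (- (A * (exp (zeta t - eta t) - 1)) - B * (1 - exp (k1 * eta t - k2 * zeta t)))
                      * exp (L * t) + (- eta t - zeta t) * (exp (L * t) * L)).
  assert (DD : forall t, derivable_pt_lim D t (dD t)).
  { intros t. apply (derivable_pt_lim_mult (fun t => - eta t - zeta t) (fun t => exp (L * t))).
    - apply derivable_pt_lim_minus; [|apply Dzeta]. now apply derivable_pt_lim_opp.
    - apply (derivable_pt_lim_exp_comp (fun t => L * t)).
      apply (derivable_pt_lim_eq_deriv _ _ (L * 1)); [ring|].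
      apply derivable_pt_lim_scal, derivable_pt_lim_id. }
  assert (HD : D t2 <= D m).
  { apply (le_of_derivable_pt_lim_nonneg D dD); [unfold t2; lra|intros; apply DD|].
    intros x Hx. pose proof (exp_pos (L * x)).
    pose proof (minus_rate_bound (eta x) (zeta x) (- eta t2) (Hcone x Hx)
      ltac:(pose proof (Hrise x Hx); lra)) as Hrate.
    unfold dD. fold L in Hrate.
    replace ((- (A * (exp (zeta x - eta x) - 1)) - B * (1 - exp (k1 * eta x - k2 * zeta x)))
               * exp (L * x) + (- eta x - zeta x) * (exp (L * x) * L))
      with (exp (L * x) * (L * (- eta x - zeta x)
               - (A * (exp (zeta x - eta x) - 1) + B * (1 - exp (k1 * eta x - k2 * zeta x)))))
      by ring.
    apply Rmult_le_pos; lra. }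
  unfold D in HD. rewrite He, Hz in HD.
  destruct (Hbefore t2 ltac:(unfold t2; lra)).
  pose proof (exp_pos (L * t2)). assert (0 < - eta t2 - zeta t2) by nra. nra.
Qed.

End Exit.

Lemma minus_cone_invariant : B * (k1 - th * k2) <= A * th * (1 - th) ->
  (exists t0, forall t, t <= t0 -> eta t < zeta t /\ zeta t < th * eta t) ->
  forall t, eta t < zeta t /\ zeta t < th * eta t.
Proof.
  intros Hcond [t0 Ht0] t1. apply NNPP. intros Hout.
  destruct (first_exit_time (fun t => zeta t - eta t) (fun t => th * eta t - zeta t) t0 t1)
    as [m [Hbefore [G1 [G2 Hexit]]]].
  - intros t. apply (derivable_pt_lim_continuity_pt _ _ _ (derivable_pt_lim_minus _ _ _ _ _ (Dzeta t) (Deta t))).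
  - intros t. apply (derivable_pt_lim_continuity_pt _ _ _
      (derivable_pt_lim_minus _ _ _ _ _ (derivable_pt_lim_scal _ th _ _ (Deta t)) (Dzeta t))).
  - intros t Ht. destruct (Ht0 t Ht). lra.
  - intros [Hg1 Hg2]. apply Hout. lra.
  - assert (Hcone : forall r, r < m -> eta r < zeta r /\ zeta r < th * eta r)
      by (intros r Hr; destruct (Hbefore r Hr); lra).
    simpl in G1, G2. assert (Hem : eta m <= 0) by nra.
    destruct Hexit as [Hdiag|Hray]; simpl in *.
    + destruct (Rle_lt_or_eq_dec _ _ Hem) as [Hneg|Hzero].
      * apply (minus_no_exit_diagonal m Hcone); lra.
      * apply (minus_no_exit_origin m Hcone); lra.
    + destruct (Rle_lt_or_eq_dec _ _ Hem) as [Hneg|Hzero].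
      * apply (minus_no_exit_ray m Hcone Hcond); lra.
      * apply (minus_no_exit_origin m Hcone); nra.
Qed.

Section InCone.

Hypothesis Hcone : forall t, eta t < zeta t /\ zeta t < th * eta t.

Lemma minus_cone_eta_increasing t1 t2 : t1 < t2 -> eta t1 < eta t2.
Proof.
  intros Ht. apply (lt_of_derivable_pt_lim_pos eta (fun t => A * (exp (zeta t - eta t) - 1)));
    [exact Ht|intros; apply Deta|].
  intros t _. destruct (Hcone t).
  assert (1 < exp (zeta t - eta t)) by (rewrite <- exp_0; apply exp_increasing; lra). nra.
Qed.

Lemma minus_cone_zeta_increasing t1 t2 : t1 < t2 -> zeta t1 < zeta t2.
Proof.
  intros Ht. apply (lt_of_derivable_pt_lim_pos zeta (fun t => B * (1 - exp (k1 * eta t - k2 * zeta t))));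
    [exact Ht|intros; apply Dzeta|].
  intros t _. destruct (Hcone t). assert (eta t < 0) by nra.
  assert (exp (k1 * eta t - k2 * zeta t) < 1) by (rewrite <- exp_0; apply exp_increasing; nra). nra.
Qed.

(* If eta stayed below - eps, zeta' would be bounded below and zeta could not stay negative. *)
Lemma minus_cone_tends_to_0 : lim_pinfty eta 0 /\ lim_pinfty zeta 0.
Proof.
  assert (Hsmall : forall eps, 0 < eps -> exists T, forall t, T < t ->
                     Rabs (eta t) < eps /\ Rabs (zeta t) < eps).
  { intros eps He. destruct (classic (exists T, - eps < eta T)) as [[T HT]|Hlow].
    - exists T. intros t Ht. pose proof (minus_cone_eta_increasing T t Ht). destruct (Hcone t).
      split; rewrite Rabs_left; nra.
    - exfalso.
      assert (Hle : forall t, eta t <= - eps)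
        by (intros t; apply Rnot_lt_le; intros h; apply Hlow; now exists t).
      set (c := B * (1 - exp (- ((k1 - k2) * (th * eps))))).
      assert (Hc : 0 < c).
      { assert (exp (- ((k1 - k2) * (th * eps))) < 1)
          by (rewrite <- exp_0; apply exp_increasing;
              assert (0 < (k1 - k2) * (th * eps)) by (apply Rmult_lt_0_compat; nra); lra).
        unfold c. nra. }
      assert (Dz : forall t, c <= B * (1 - exp (k1 * eta t - k2 * zeta t))).
      { intros t. destruct (Hcone t). specialize (Hle t).
        assert (zeta t <= - (th * eps)) by nra.
        assert (Hexp : k1 * eta t - k2 * zeta t <= - ((k1 - k2) * (th * eps))) by nra.
        apply exp_le_compat in Hexp. unfold c. apply Rmult_le_compat_l; lra. }
      set (t3 := - zeta 0 / c + 1).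
      destruct (Hcone 0).
      assert (Ht3 : 0 < t3) by (unfold t3; assert (0 <= - zeta 0 / c) by (apply Rle_mult_inv_pos; nra); lra).
      destruct (MVT_cor2 zeta _ 0 t3 Ht3 (fun x _ => Dzeta x)) as [x [Ex _]].
      specialize (Dz x). destruct (Hcone t3). assert (zeta t3 < 0) by nra.
      assert (c * t3 = - zeta 0 + c) by (unfold t3; field; lra).
      assert (c * t3 <= B * (1 - exp (k1 * eta x - k2 * zeta x)) * t3)
        by (apply Rmult_le_compat_r; lra).
      rewrite Rminus_0_r in Ex. lra. }
  split; intros eps He; destruct (Hsmall eps He) as [T HT]; exists T; intros t Ht;
    rewrite Rminus_0_r; apply HT, Ht.
Qed.

End InCone.

End MinusSystem.

(** * The exponent q_JL *)

Lemma INR_dimension_bounds (k n : nat) : (1 <= k)%nat -> (2 * k + 8 < n)%nat ->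
  1 <= INR k /\ 2 * INR k + 9 <= INR n.
Proof.
  intros Hk Hn. split; [apply (le_INR 1 k) in Hk; exact Hk|].
  assert (H : (2 * k + 9 <= n)%nat) by lia. apply le_INR in H.
  rewrite plus_INR, mult_INR in H. simpl in H. lra.
Qed.

Lemma qJL_eq (k n : nat) : (1 <= k)%nat -> (2 * k + 8 < n)%nat ->
  let K := INR k in let N := INR n in
  let Den := (K + 1) * N - 2 * K * (K + 3) - 2 * sqrt (2 * ((K + 1) * N - 2 * K)) in
  0 < Den /\ qJL k n = K + 2 * K * (K + 1) ^ 2 / Den.
Proof.
  intros Hk Hn K N Den. destruct (INR_dimension_bounds k n Hk Hn) as [HK HN].
  change (1 <= K) in HK. change (2 * K + 9 <= N) in HN.
  set (S := sqrt (2 * ((K + 1) * N - 2 * K))).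
  assert (HS : S * S = 2 * ((K + 1) * N - 2 * K)) by (apply sqrt_sqrt; nra).
  assert (HS0 : 0 <= S) by apply sqrt_pos.
  set (P := (K + 1) * (N - 2 * K) - 4 * K).
  assert (EDen : Den = P - 2 * S) by (unfold Den, P, S; ring).
  assert (HPS : 4 * (S * S) < P * P).
  { assert (P * P = 4 * (S * S) + (K + 1) ^ 2 * (N - 2 * K) * (N - 2 * K - 8))
      by (rewrite HS; unfold P; ring).
    assert (0 < (K + 1) ^ 2 * (N - 2 * K) * (N - 2 * K - 8)) by
      (apply Rmult_lt_0_compat; [apply Rmult_lt_0_compat|]; nra).
    lra. }
  assert (HP : 0 < P) by (unfold P; nra).
  assert (HDen : 0 < Den).
  { rewrite EDen. destruct (Rle_or_lt P (2 * S)); [|lra]. exfalso. nra. }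
  split; [exact HDen|].
  unfold qJL. fold K N S. fold Den.
  replace ((K + 1) * N - 2 * (K - 1) - 2 * S) with (Den + 2 * (K + 1) ^ 2) by (unfold Den, S; ring).
  change ((K + 1) * N - 2 * K * (K + 3) - 2 * S) with Den. field. lra.
Qed.

Lemma exponent_params (k n : nat) (q : R) :
  (1 <= k)%nat -> (2 * k + 8 < n)%nat -> qJL k n <= q ->
  let A := INR n - 2 * INR k - INR k * tau k q in
  INR k < q /\ 0 < tau k q /\ tau k q < A /\ 8 * A <= (A - tau k q) ^ 2.
Proof.
  intros Hk Hn Hq A.
  destruct (qJL_eq k n Hk Hn) as [HDen EqJL].
  destruct (INR_dimension_bounds k n Hk Hn) as [HK HN].
  set (K := INR k) in *. set (N := INR n) in *.
  set (S := sqrt (2 * ((K + 1) * N - 2 * K))) in *.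
  set (Den := (K + 1) * N - 2 * K * (K + 3) - 2 * S) in *.
  assert (HS : S * S = 2 * ((K + 1) * N - 2 * K)) by (apply sqrt_sqrt; nra).
  assert (HS0 : 0 <= S) by apply sqrt_pos.
  assert (Hfrac : 0 < 2 * K * (K + 1) ^ 2 / Den) by (apply Rdiv_lt_0_compat; nra).
  assert (HqK : K < q) by lra.
  set (t := tau k q). assert (Htq : t * (q - K) = 2 * K) by (unfold t, tau; fold K; field; lra).
  assert (Ht : 0 < t) by (unfold t, tau; fold K; apply Rdiv_lt_0_compat; lra).
  assert (Hu : (K + 1) ^ 2 * t <= Den).
  { assert (2 * K * (K + 1) ^ 2 <= Den * (q - K)).
    { assert (2 * K * (K + 1) ^ 2 / Den * Den = 2 * K * (K + 1) ^ 2) by (field; lra). nra. }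
    assert ((K + 1) ^ 2 * t * (q - K) = 2 * K * (K + 1) ^ 2) by (rewrite <- Htq; ring).
    nra. }
  set (P := (K + 1) * (N - 2 * K) - 4 * K).
  assert (HAt : (K + 1) * (A - t) = P - (K + 1) ^ 2 * t + 4 * K) by (unfold A, P; fold K N t; ring).
  assert (HP : (K + 1) ^ 2 * t - P <= - 2 * S) by (unfold Den, P in *; lra).
  repeat split; [exact HqK|exact Ht|nra|].
  assert (Id : (K + 1) ^ 2 * ((A - t) ^ 2 - 8 * A) = ((K + 1) ^ 2 * t - P) ^ 2 - 4 * (S * S))
    by (rewrite HS; unfold A, P; fold K N t; ring).
  assert (0 <= ((K + 1) ^ 2 * t - P) ^ 2 - 4 * (S * S)) by nra.
  assert (0 <= (A - t) ^ 2 - 8 * A); [|lra].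
  apply (Rmult_le_reg_l ((K + 1) ^ 2)); [nra|]. rewrite Rmult_0_r, Id. lra.
Qed.

(** * The solution of (E_v) in logarithmic coordinates *)

Section Solution.

Variables (k n : nat) (q : R) (v dv d2v : R -> R).
Hypotheses (Hk : (1 <= k)%nat) (Hn : (2 * k + 8 < n)%nat) (Hq : qJL k n <= q)
  (Hsol : is_global_solution k n q v dv d2v).

Let K := INR k.
Let N := INR n.
Let ta := tau k q.
Let lam := lamt k n q.
Let A := N - 2 * K - K * ta.
Let B := q * ta.
Let W := fun s => s ^ (n - k) * dv s ^ k.

Lemma solution_params : K < q /\ 0 < ta /\ ta < A /\ 8 * A <= (A - ta) ^ 2.
Proof. exact (exponent_params k n q Hk Hn Hq). Qed.

Lemma K_ge_1 : 1 <= K.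
Proof. apply (INR_dimension_bounds k n Hk Hn). Qed.

Lemma A_pos : 0 < A.
Proof. destruct solution_params as [_ [? [? _]]]. lra. Qed.

Lemma lam_pos : 0 < lam.
Proof. apply Rmult_lt_0_compat; [apply pow_lt, solution_params|apply A_pos]. Qed.

Lemma ta_mul_q_sub_K : ta * (q - K) = 2 * K.
Proof. destruct solution_params. unfold ta, tau. fold K. field. lra. Qed.

Lemma A_add_B : A + B = N.
Proof. pose proof ta_mul_q_sub_K. unfold A, B. nra. Qed.

Lemma B_pos : 0 < B.
Proof. destruct solution_params as [? [? _]]. pose proof K_ge_1. unfold B. nra. Qed.

Lemma W_deriv s : 0 < s -> derivable_pt_lim W s (lam * s ^ (n - 1) * Rpower (- v s) q).
Proof. destruct Hsol as (_ & _ & _ & _ & _ & _ & _ & _ & H). exact (H s). Qed.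

Lemma v_deriv s : 0 < s -> derivable_pt_lim v s (dv s).
Proof. destruct Hsol as (H & _). exact (H s). Qed.

Lemma dv_deriv s : 0 < s -> derivable_pt_lim dv s (d2v s).
Proof. destruct Hsol as (_ & H & _). exact (H s). Qed.

Lemma v_neg s : 0 <= s -> v s < 0.
Proof. destruct Hsol as (_ & _ & _ & _ & _ & _ & _ & H & _). exact (H s). Qed.

Lemma Rpower_neg_v_pos s : 0 < Rpower (- v s) q.
Proof. apply exp_pos. Qed.

Lemma v_add1_vanishes : vanishes_at_0plus (fun s => v s + 1).
Proof.
  destruct Hsol as (_ & _ & _ & Hquot & _ & Hv0 & Hdv0 & _).
  intros eps He. destruct (Hquot 1 Rlt_0_1) as [d [Hd Hnear]].
  exists (Rmin d eps). split; [now apply Rmin_glb_lt|]. intros x Hx.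
  pose proof (Rmin_l d eps). pose proof (Rmin_r d eps).
  specialize (Hnear x). simpl in Hnear. unfold R_dist in Hnear.
  rewrite Hv0, Hdv0 in Hnear.
  assert (Hx1 : Rabs ((v x - -1) / x - 0) < 1)
    by (apply Hnear; split; [lra|rewrite Rminus_0_r, Rabs_right; lra]).
  replace ((v x - -1) / x - 0) with ((v x + 1) * / x) in Hx1 by (field; lra).
  rewrite Rabs_mult, Rabs_inv, (Rabs_right x) in Hx1 by lra.
  apply (Rmult_lt_compat_r x) in Hx1; [|lra].
  rewrite Rmult_assoc, Rinv_l, Rmult_1_r, Rmult_1_l in Hx1 by lra. lra.
Qed.

Lemma dv_vanishes : vanishes_at_0plus dv.
Proof.
  destruct Hsol as (_ & _ & _ & _ & Hlim & _ & Hdv0 & _).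
  intros eps He. destruct (Hlim eps He) as [d [Hd Hnear]]. exists d. split; [exact Hd|].
  intros x Hx. specialize (Hnear x). simpl in Hnear. unfold R_dist in Hnear.
  rewrite Hdv0, !Rminus_0_r in Hnear. apply Hnear.
  split; [lra|rewrite Rabs_right; lra].
Qed.

Lemma W_vanishes : vanishes_at_0plus W.
Proof.
  intros eps He. destruct (dv_vanishes 1 Rlt_0_1) as [d [Hd Hdv]].
  exists (Rmin (Rmin d eps) 1). split; [repeat apply Rmin_glb_lt; lra|]. intros x Hx.
  pose proof (Rmin_l (Rmin d eps) 1). pose proof (Rmin_r (Rmin d eps) 1).
  pose proof (Rmin_l d eps). pose proof (Rmin_r d eps).
  unfold W. rewrite Rabs_mult, <- !RPow_abs, (Rabs_right x) by lra.
  specialize (Hdv x ltac:(lra)).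
  assert (Rabs (dv x) ^ k <= 1) by (apply pow_le_one; split; [apply Rabs_pos|lra]).
  assert (x ^ (n - k) <= x) by (apply pow_le_self; [lra|lia]).
  pose proof (pow_le x (n - k) ltac:(lra)). pose proof (pow_le (Rabs (dv x)) k (Rabs_pos _)).
  nra.
Qed.

Lemma W_pos s : 0 < s -> 0 < W s.
Proof.
  intros Hs.
  assert (HW' : forall x, 0 < x -> 0 < lam * x ^ (n - 1) * Rpower (- v x) q).
  { intros x Hx. pose proof lam_pos. pose proof (pow_lt x (n - 1) Hx).
    pose proof (Rpower_neg_v_pos x). apply Rmult_lt_0_compat; [apply Rmult_lt_0_compat|]; lra. }
  assert (0 <= W (s / 2)).
  { apply (vanishing_at_0plus_deriv_nonneg W (fun x => lam * x ^ (n - 1) * Rpower (- v x) q));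
      [lra|intros; apply W_deriv; lra|intros; left; apply HW'; lra|apply W_vanishes]. }
  assert (W (s / 2) < W s); [|lra].
  apply (lt_of_derivable_pt_lim_pos W (fun x => lam * x ^ (n - 1) * Rpower (- v x) q));
    [lra|intros; apply W_deriv; lra|intros; apply HW'; lra].
Qed.

Lemma dv_neq0 s : 0 < s -> dv s <> 0.
Proof.
  intros Hs Hdv. pose proof (W_pos s Hs) as HW. unfold W in HW.
  rewrite Hdv, pow_i in HW by lia. lra.
Qed.

Lemma dv_pow_pos s : 0 < s -> 0 < dv s ^ k.
Proof.
  intros Hs. pose proof (W_pos s Hs) as HW. unfold W in HW. pose proof (pow_lt s (n - k) Hs).
  destruct (Rlt_or_le 0 (dv s ^ k)); [assumption|nra].
Qed.

Lemma dv_sign : (forall s, 0 < s -> 0 < dv s) \/ (forall s, 0 < s -> dv s < 0).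
Proof.
  assert (Hcont : forall a b, 0 < a -> forall x, a <= x <= b -> continuity_pt dv x)
    by (intros a b Ha x Hx; apply (derivable_pt_lim_continuity_pt _ _ _ (dv_deriv x ltac:(lra)))).
  destruct (classic (exists s, 0 < s /\ 0 < dv s)) as [[s1 [Hs1 Hpos1]]|Hnone].
  - left. intros s Hs. destruct (Rlt_or_le 0 (dv s)) as [|Hle]; [assumption|exfalso].
    assert (Hneg : dv s < 0) by (pose proof (dv_neq0 s Hs); lra).
    destruct (Rtotal_order s s1) as [Hlt|[->|Hgt]]; [|lra|].
    + destruct (Ranalysis5.IVT_interv dv s s1 (Hcont s s1 Hs) Hlt Hneg Hpos1) as [z [Hz Ez]].
      apply (dv_neq0 z); [lra|exact Ez].
    + destruct (Ranalysis5.IVT_interv (fun x => - dv x) s1 s) as [z [Hz Ez]]; [|exact Hgt|lra|lra|].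
      * intros x Hx. apply continuity_pt_opp, (Hcont s1 s Hs1 x Hx).
      * apply (dv_neq0 z); [lra|lra].
  - right. intros s Hs. destruct (Rlt_or_le (dv s) 0) as [|Hle]; [assumption|exfalso].
    pose proof (dv_neq0 s Hs). apply Hnone. exists s. split; lra.
Qed.

(* Logarithmic coordinates of the orbit: y = ta ^ k * exp eta and z = lam * exp zeta. *)
Let eta := fun t => ln (W (exp t)) - A * t - K * ln ta.
Let zeta := fun t => B * t + q * ln (- v (exp t)).

Lemma exp_zeta_sub_eta t :
  exp (zeta t - eta t) = lam * exp t ^ n * Rpower (- v (exp t)) q / (A * W (exp t)).
Proof.
  set (s := exp t). assert (Hs : 0 < s) by apply exp_pos.
  pose proof (W_pos s Hs). pose proof A_pos. destruct solution_params as [_ [Hta _]].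
  replace (zeta t - eta t) with (INR n * t + q * ln (- v s) + INR k * ln ta + - ln (W s))
    by (pose proof A_add_B; unfold zeta, eta, K, N in *; fold s; nra).
  rewrite !exp_plus, exp_mult_INR, exp_Ropp, exp_ln, exp_mult_INR, exp_ln by assumption.
  fold s. change (exp (q * ln (- v s))) with (Rpower (- v s) q).
  unfold lam, lamt. fold ta K N A. field. lra.
Qed.

Lemma eta_deriv t : derivable_pt_lim eta t (A * (exp (zeta t - eta t) - 1)).
Proof.
  set (s := exp t). assert (Hs : 0 < s) by apply exp_pos. pose proof (W_pos s Hs) as HW.
  pose proof A_pos.
  apply (derivable_pt_lim_ext (fun t => ln (W (exp t)) - (A * t + K * ln ta)));
    [intros; unfold eta; ring|].
  apply (derivable_pt_lim_eq_deriv _ _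
    (/ W s * (lam * s ^ (n - 1) * Rpower (- v s) q * s) - (A * 1 + 0))).
  - rewrite exp_zeta_sub_eta. fold s.
    assert (Hsn : s ^ n = s ^ (n - 1) * s).
    { replace n with (S (n - 1)) at 1 by lia. simpl. ring. }
    rewrite Hsn. field. split; lra.
  - apply derivable_pt_lim_minus.
    + apply (derivable_pt_lim_ln_comp (fun t => W (exp t))); [exact HW|].
      apply (derivable_pt_lim_comp exp W); [apply derivable_pt_lim_exp|now apply W_deriv].
    + apply derivable_pt_lim_plus; [|apply derivable_pt_lim_const].
      apply derivable_pt_lim_scal, derivable_pt_lim_id.
Qed.

Lemma exp_eta_zeta_ratio t :
  exp (/ K * eta t - / q * zeta t) = exp t * Rabs (dv (exp t)) / (ta * (- v (exp t))).
Proof.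
  set (s := exp t). assert (Hs : 0 < s) by apply exp_pos.
  assert (Hdv : 0 < Rabs (dv s)) by (apply Rabs_pos_lt, dv_neq0, Hs).
  assert (Hv : 0 < - v s) by (pose proof (v_neg s ltac:(lra)); lra).
  destruct solution_params as [HqK [Hta _]]. pose proof K_ge_1.
  assert (LW : ln (W s) = (N - K) * t + K * ln (Rabs (dv s))).
  { replace (W s) with (s ^ (n - k) * Rabs (dv s) ^ k)
      by (unfold W; rewrite RPow_abs, Rabs_right; [reflexivity|left; now apply dv_pow_pos]).
    rewrite ln_mult, !ln_pow by (try apply pow_lt; assumption).
    unfold s. rewrite ln_exp, minus_INR by lia. unfold N, K. ring. }
  replace (/ K * eta t - / q * zeta t) with (t + ln (Rabs (dv s)) + - ln ta + - ln (- v s))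
    by (unfold eta, zeta; fold s; rewrite LW; unfold A, B; field; split; lra).
  rewrite !exp_plus, !exp_Ropp, !exp_ln by assumption. fold s. field. split; lra.
Qed.

Lemma zeta_deriv_raw t : derivable_pt_lim zeta t (B - q * (exp t * dv (exp t)) / (- v (exp t))).
Proof.
  set (s := exp t). assert (Hv : 0 < - v s) by (pose proof (v_neg s (Rlt_le _ _ (exp_pos t))); lra).
  apply (derivable_pt_lim_eq_deriv _ _ (B * 1 + q * (/ (- v s) * (-1 * (dv s * s))))).
  - fold s. field. lra.
  - apply derivable_pt_lim_plus; [apply derivable_pt_lim_scal, derivable_pt_lim_id|].
    apply derivable_pt_lim_scal, (derivable_pt_lim_ln_comp (fun t => - v (exp t))); [exact Hv|].
    apply (derivable_pt_lim_ext (fun t => -1 * v (exp t))); [intros; ring|].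
    apply derivable_pt_lim_scal, (derivable_pt_lim_comp exp v);
      [apply derivable_pt_lim_exp|apply v_deriv, exp_pos].
Qed.

Lemma zeta_deriv_of_dv_pos : (forall s, 0 < s -> 0 < dv s) ->
  forall t, derivable_pt_lim zeta t (B * (1 - exp (/ K * eta t - / q * zeta t))).
Proof.
  intros Hdv t. eapply derivable_pt_lim_eq_deriv; [|apply zeta_deriv_raw].
  rewrite exp_eta_zeta_ratio. set (s := exp t). assert (Hs : 0 < s) by apply exp_pos.
  assert (Hv : 0 < - v s) by (pose proof (v_neg s ltac:(lra)); lra).
  rewrite Rabs_right by (left; now apply Hdv).
  destruct solution_params as [_ [Hta _]]. unfold B. field. split; lra.
Qed.

Lemma zeta_deriv_of_dv_neg : (forall s, 0 < s -> dv s < 0) ->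
  forall t, derivable_pt_lim zeta t (B * (1 + exp (/ K * eta t - / q * zeta t))).
Proof.
  intros Hdv t. eapply derivable_pt_lim_eq_deriv; [|apply zeta_deriv_raw].
  rewrite exp_eta_zeta_ratio. set (s := exp t). assert (Hs : 0 < s) by apply exp_pos.
  assert (Hv : 0 < - v s) by (pose proof (v_neg s ltac:(lra)); lra).
  rewrite Rabs_left by (now apply Hdv).
  destruct solution_params as [_ [Hta _]]. unfold B. field. split; lra.
Qed.

Lemma N_pos : 0 < N.
Proof. pose proof A_add_B. pose proof A_pos. pose proof B_pos. lra. Qed.

(* For this th, cone_condition is equivalent to (A - ta)^2 >= 8 A. *)
Let th := (A + ta) / (2 * A).

Lemma th_bounds : 0 < th < 1.
Proof.
  destruct solution_params as [_ [Hta [HtA _]]]. unfold th.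
  split; [apply Rdiv_lt_0_compat; lra|].
  apply (Rmult_lt_reg_r (2 * A)); [lra|]. field_simplify; lra.
Qed.

Lemma cone_condition : B * (/ K - th * / q) <= A * th * (1 - th).
Proof.
  destruct solution_params as [HqK [Hta [HtA H8]]]. pose proof K_ge_1. pose proof A_pos.
  assert (Hqta : q * ta = K * ta + 2 * K) by (pose proof ta_mul_q_sub_K; nra).
  assert (E1 : B * (/ K - th * / q) = ta + 2 - ta * th).
  { unfold B. replace (q * ta * (/ K - th * / q)) with (q * ta * / K - ta * th) by (field; lra).
    rewrite Hqta. field. lra. }
  assert (E2 : A * th * (1 - th) - (ta + 2 - ta * th) = ((A - ta) ^ 2 - 8 * A) / (4 * A))
    by (unfold th; field; lra).
  assert (0 <= ((A - ta) ^ 2 - 8 * A) / (4 * A)) by (apply Rle_mult_inv_pos; lra).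
  lra.
Qed.

Section IncreasingProfile.

Hypothesis Hdv : forall s, 0 < s -> 0 < dv s.

Lemma v_bounds s : 0 < s -> -1 < v s < 0.
Proof.
  intros Hs. split; [|apply v_neg; lra].
  assert (0 <= v (s / 2) + 1).
  { apply (vanishing_at_0plus_deriv_nonneg (fun x => v x + 1) dv); [lra| | |apply v_add1_vanishes].
    - intros x Hx. apply (derivable_pt_lim_eq_deriv _ _ (dv x + 0)); [ring|].
      apply derivable_pt_lim_plus; [apply v_deriv; lra|apply derivable_pt_lim_const].
    - intros x Hx. left. apply Hdv. lra. }
  assert (v (s / 2) < v s); [|lra].
  apply (lt_of_derivable_pt_lim_pos v dv); [lra|intros; apply v_deriv; lra|intros; apply Hdv; lra].
Qed.

Lemma v_le x y : 0 < x -> x <= y -> v x <= v y.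
Proof.
  intros Hx Hxy.
  apply (le_of_derivable_pt_lim_nonneg v dv); [exact Hxy|intros; apply v_deriv; lra|].
  intros z Hz. left. apply Hdv. lra.
Qed.

Let pow_n_deriv x : derivable_pt_lim (fun y => y ^ n) x (N * x ^ (n - 1)).
Proof.
  eapply derivable_pt_lim_eq_deriv; [|apply derivable_pt_lim_pow].
  unfold N. do 2 f_equal. lia.
Qed.

Lemma W_le s : 0 < s -> W s <= lam * s ^ n / N.
Proof.
  intros Hs. pose proof N_pos. pose proof lam_pos.
  assert (0 <= lam / N * s ^ n - W s); [|unfold Rdiv in *; nra].
  apply (vanishing_at_0plus_deriv_nonneg (fun x => lam / N * x ^ n - W x)
    (fun x => lam / N * (N * x ^ (n - 1)) - lam * x ^ (n - 1) * Rpower (- v x) q) s Hs).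
  - intros x Hx. apply derivable_pt_lim_minus; [apply derivable_pt_lim_scal, pow_n_deriv|].
    apply W_deriv. lra.
  - intros x Hx. destruct (v_bounds x ltac:(lra)).
    pose proof (Rpower_lt_one (- v x) q ltac:(lra) ltac:(destruct solution_params; pose proof K_ge_1; lra)).
    pose proof (pow_le x (n - 1) ltac:(lra)).
    replace (lam / N * (N * x ^ (n - 1)) - lam * x ^ (n - 1) * Rpower (- v x) q)
      with (lam * x ^ (n - 1) * (1 - Rpower (- v x) q)) by (field; lra).
    apply Rmult_le_pos; [apply Rmult_le_pos|]; lra.
  - apply vanishes_at_0plus_minus; [apply vanishes_at_0plus_scal_pow; lia|apply W_vanishes].
Qed.

Lemma W_ge s : 0 < s -> lam * s ^ n * Rpower (- v s) q / N <= W s.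
Proof.
  intros Hs. pose proof N_pos. pose proof lam_pos.
  set (U := Rpower (- v s) q). pose proof (Rpower_neg_v_pos s).
  assert (0 <= W s - lam * U / N * s ^ n); [|unfold Rdiv in *; nra].
  apply (vanishing_at_0plus_deriv_nonneg (fun x => W x - lam * U / N * x ^ n)
    (fun x => lam * x ^ (n - 1) * Rpower (- v x) q - lam * U / N * (N * x ^ (n - 1))) s Hs).
  - intros x Hx. apply derivable_pt_lim_minus; [apply W_deriv; lra|].
    apply derivable_pt_lim_scal, pow_n_deriv.
  - intros x Hx. destruct (v_bounds x ltac:(lra)). destruct (v_bounds s Hs).
    assert (U <= Rpower (- v x) q).
    { apply Rle_Rpower_l; [destruct solution_params; pose proof K_ge_1; lra|].
      pose proof (v_le x s ltac:(lra) ltac:(lra)). lra. }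
    pose proof (pow_le x (n - 1) ltac:(lra)).
    replace (lam * x ^ (n - 1) * Rpower (- v x) q - lam * U / N * (N * x ^ (n - 1)))
      with (lam * x ^ (n - 1) * (Rpower (- v x) q - U)) by (field; lra).
    apply Rmult_le_pos; [apply Rmult_le_pos|]; lra.
  - apply vanishes_at_0plus_minus; [apply W_vanishes|apply vanishes_at_0plus_scal_pow; lia].
Qed.

Lemma exp_zeta_sub_eta_le t : exp (zeta t - eta t) <= N / A.
Proof.
  set (s := exp t). assert (Hs : 0 < s) by apply exp_pos.
  pose proof A_pos. pose proof N_pos. pose proof lam_pos. pose proof (W_pos s Hs).
  pose proof (W_ge s Hs). pose proof (pow_lt s n Hs). pose proof (Rpower_neg_v_pos s).
  rewrite exp_zeta_sub_eta. fold s.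
  apply (Rmult_le_reg_r (A * W s)); [nra|].
  replace (lam * s ^ n * Rpower (- v s) q / (A * W s) * (A * W s))
    with (N * (lam * s ^ n * Rpower (- v s) q / N)) by (field; split; lra).
  replace (N / A * (A * W s)) with (N * W s) by (field; lra).
  apply Rmult_le_compat_l; lra.
Qed.

Lemma exp_zeta_sub_eta_gt_1 t : A / N < Rpower (- v (exp t)) q -> 1 < exp (zeta t - eta t).
Proof.
  intros HU. set (s := exp t) in *. assert (Hs : 0 < s) by apply exp_pos.
  pose proof A_pos. pose proof N_pos. pose proof lam_pos. pose proof (W_pos s Hs).
  pose proof (W_le s Hs). pose proof (pow_lt s n Hs).
  rewrite exp_zeta_sub_eta. fold s.
  apply (Rmult_lt_reg_r (A * W s)); [nra|].
  replace (lam * s ^ n * Rpower (- v s) q / (A * W s) * (A * W s))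
    with (lam * s ^ n * Rpower (- v s) q) by (field; split; lra).
  assert (A * W s <= lam * s ^ n * (A / N))
    by (replace (lam * s ^ n * (A / N)) with (A * (lam * s ^ n / N)) by (field; lra);
        apply Rmult_le_compat_l; lra).
  assert (lam * s ^ n * (A / N) < lam * s ^ n * Rpower (- v s) q)
    by (apply Rmult_lt_compat_l; [nra|exact HU]).
  lra.
Qed.

Lemma Rpower_neg_v_gt_near_0 : exists d, 0 < d /\ forall s, 0 < s < d -> A / N < Rpower (- v s) q.
Proof.
  pose proof A_pos. pose proof N_pos. destruct solution_params as [HqK _]. pose proof K_ge_1.
  assert (HAN : 0 < A / N < 1).
  { split; [apply Rdiv_lt_0_compat; lra|].
    apply (Rmult_lt_reg_r N); [lra|]. pose proof A_add_B. pose proof B_pos. field_simplify; lra. }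
  set (u0 := Rpower (A / N) (/ q)).
  assert (Hu0 : 0 < u0 < 1)
    by (split; [apply exp_pos|apply Rpower_lt_one; [lra|apply Rinv_0_lt_compat; lra]]).
  destruct (v_add1_vanishes (1 - u0) ltac:(lra)) as [d [Hd Hnear]].
  exists d. split; [exact Hd|]. intros s Hs.
  specialize (Hnear s Hs). apply Rabs_def2 in Hnear. destruct (v_bounds s ltac:(lra)).
  replace (A / N) with (Rpower u0 q)
    by (unfold u0; rewrite Rpower_mult, Rinv_l, Rpower_1 by lra; reflexivity).
  apply Rlt_Rpower_l; lra.
Qed.

(* Near t = - oo, zeta < B t and zeta - eta lies in (0, ln (N / A)]. *)
Lemma cone_start : exists t0, forall t, t <= t0 -> eta t < zeta t /\ zeta t < th * eta t.
Proof.
  pose proof A_pos. pose proof N_pos. pose proof B_pos. pose proof th_bounds.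
  destruct solution_params as [HqK _]. pose proof K_ge_1.
  destruct Rpower_neg_v_gt_near_0 as [d [Hd HU]].
  set (LNA := ln (N / A)).
  set (t1 := - th * LNA / ((1 - th) * B)).
  exists (Rmin (ln d - 1) t1). intros t Ht. set (s := exp t).
  pose proof (Rmin_l (ln d - 1) t1). pose proof (Rmin_r (ln d - 1) t1).
  assert (Hs : 0 < s < d).
  { split; [apply exp_pos|]. unfold s. rewrite <- (exp_ln d) by exact Hd.
    apply exp_increasing. lra. }
  destruct (v_bounds s ltac:(lra)) as [Hv1 Hv2].
  pose proof (exp_zeta_sub_eta_gt_1 t (HU s Hs)) as Hgt. pose proof (exp_zeta_sub_eta_le t) as Hle.
  assert (Hlt : eta t < zeta t) by (rewrite <- exp_0 in Hgt; apply exp_lt_inv in Hgt; lra).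
  split; [exact Hlt|].
  assert (Hdiff : zeta t - eta t <= LNA)
    by (unfold LNA; rewrite <- (ln_exp (zeta t - eta t));
        destruct (Req_dec (exp (zeta t - eta t)) (N / A)) as [->|]; [lra|];
        left; apply ln_increasing; [apply exp_pos|lra]).
  assert (Hzeta : zeta t < B * t).
  { unfold zeta. fold s. assert (ln (- v s) < 0) by (rewrite <- ln_1; apply ln_increasing; lra).
    assert (q * ln (- v s) < 0) by nra. lra. }
  assert (Ht1 : (1 - th) * B * t <= - th * LNA).
  { assert (Hpos : 0 < (1 - th) * B) by nra.
    assert (Htt1 : t <= t1) by lra.
    apply (Rmult_le_compat_l ((1 - th) * B)) in Htt1; [|lra].
    replace ((1 - th) * B * t1) with (- th * LNA) in Htt1 by (unfold t1; field; lra).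
    lra. }
  assert ((1 - th) * zeta t < (1 - th) * (B * t)) by (apply Rmult_lt_compat_l; lra).
  assert (th * (zeta t - eta t) <= th * LNA) by (apply Rmult_le_compat_l; lra).
  nra.
Qed.

End IncreasingProfile.

Lemma dv_pos s : 0 < s -> 0 < dv s.
Proof.
  destruct dv_sign as [Hpos|Hneg]; [apply Hpos|exfalso].
  destruct solution_params as [HqK _]. pose proof K_ge_1.
  apply (plus_system_no_entire_solution eta zeta A B (/ K) (/ q)).
  - apply A_pos.
  - apply B_pos.
  - apply Rinv_0_lt_compat. lra.
  - apply Rinv_lt_contravar; nra.
  - apply eta_deriv.
  - now apply zeta_deriv_of_dv_neg.
Qed.

Lemma eta_zeta_in_cone t : eta t < zeta t /\ zeta t < th * eta t.
Proof.
  destruct solution_params as [HqK _]. pose proof K_ge_1. pose proof th_bounds.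
  apply (minus_cone_invariant eta zeta A B (/ K) (/ q) th).
  - apply A_pos.
  - apply B_pos.
  - apply Rinv_0_lt_compat. lra.
  - apply Rinv_lt_contravar; nra.
  - lra.
  - lra.
  - apply eta_deriv.
  - apply zeta_deriv_of_dv_pos, dv_pos.
  - apply cone_condition.
  - apply cone_start, dv_pos.
Qed.

Lemma eta_zeta_increasing_to_0 :
  (forall t1 t2, t1 < t2 -> eta t1 < eta t2 /\ zeta t1 < zeta t2) /\
  lim_pinfty eta 0 /\ lim_pinfty zeta 0.
Proof.
  destruct solution_params as [HqK _]. pose proof K_ge_1. destruct th_bounds.
  pose proof A_pos. pose proof B_pos.
  assert (0 < / q) by (apply Rinv_0_lt_compat; lra).
  assert (/ q < / K) by (apply Rinv_lt_contravar; nra).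
  pose proof eta_deriv as Deta. pose proof (zeta_deriv_of_dv_pos dv_pos) as Dzeta.
  pose proof eta_zeta_in_cone as Hcone.
  split; [intros t1 t2 Ht; split|].
  - apply (minus_cone_eta_increasing eta zeta A th); assumption.
  - apply (minus_cone_zeta_increasing eta zeta B (/ K) (/ q) th); assumption.
  - apply (minus_cone_tends_to_0 eta zeta A B (/ K) (/ q) th); assumption.
Qed.

Lemma yfun_eq t : yfun k q dv t = ta ^ k * exp (eta t).
Proof.
  set (s := exp t). pose proof (W_pos s (exp_pos t)) as HW.
  destruct solution_params as [HqK [Hta _]].
  assert (Hexp : exp (eta t) = W s * exp (- (A * t)) / ta ^ k).
  { unfold eta, Rminus. fold s.
    rewrite !exp_plus, exp_ln, !exp_Ropp by exact HW. unfold K.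
    rewrite exp_mult_INR, exp_ln by exact Hta. field.
    split; [apply Rgt_not_eq, exp_pos|apply pow_nonzero; lra]. }
  assert (Hpow : s ^ k * exp (K * ta * t) = s ^ (n - k) * exp (- (A * t))).
  { unfold s. rewrite <- !exp_mult_INR, <- !exp_plus, minus_INR by lia.
    f_equal. unfold A, K, N. ring. }
  unfold yfun. fold s. rewrite Hexp.
  replace (2 * INR k ^ 2 / (q - INR k)) with (K * ta) by (unfold ta, tau; fold K; field; lra).
  unfold W. rewrite Rpow_mult_distr.
  transitivity (dv s ^ k * (s ^ k * exp (K * ta * t))); [ring|].
  rewrite Hpow. field. apply pow_nonzero. lra.
Qed.

Lemma zfun_eq t : zfun k n q v t = lam * exp (zeta t).
Proof.
  destruct solution_params as [HqK _]. unfold zfun, zeta, Rpower. fold lam.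
  rewrite exp_plus. replace (2 * INR k * q / (q - INR k)) with B; [ring|].
  unfold B, ta, tau. fold K. field. lra.
Qed.

Lemma yfun_increasing t1 t2 : t1 < t2 -> yfun k q dv t1 < yfun k q dv t2.
Proof.
  intros Ht. rewrite !yfun_eq. destruct solution_params as [_ [Hta _]].
  apply Rmult_lt_compat_l; [now apply pow_lt|].
  apply exp_increasing, eta_zeta_increasing_to_0, Ht.
Qed.

Lemma zfun_increasing t1 t2 : t1 < t2 -> zfun k n q v t1 < zfun k n q v t2.
Proof.
  intros Ht. rewrite !zfun_eq. apply Rmult_lt_compat_l; [exact lam_pos|].
  apply exp_increasing, eta_zeta_increasing_to_0, Ht.
Qed.

Lemma yfun_lim : lim_pinfty (yfun k q dv) (ta ^ k).
Proof.
  eapply lim_pinfty_ext; [intros t; symmetry; apply yfun_eq|].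
  apply lim_pinfty_scal_exp, eta_zeta_increasing_to_0.
Qed.

Lemma zfun_lim : lim_pinfty (zfun k n q v) lam.
Proof.
  eapply lim_pinfty_ext; [intros t; symmetry; apply zfun_eq|].
  apply lim_pinfty_scal_exp, eta_zeta_increasing_to_0.
Qed.

Lemma O2_first_coordinate : (q - INR k) / acoef k n q * lamt k n q = ta ^ k.
Proof.
  destruct solution_params as [HqK [Hta _]]. pose proof A_pos.
  assert (Ea : acoef k n q = A * (q - K)).
  { unfold acoef. fold K N.
    replace (A * (q - K)) with ((N - 2 * K) * (q - K) - K * (ta * (q - K))) by (unfold A; ring).
    rewrite ta_mul_q_sub_K. ring. }
  rewrite Ea. fold lam. unfold lam, lamt. fold ta K N A. field. split; lra.
Qed.

End Solution.

Theorem lemma6 (k n : nat) (q : R) (v dv d2v : R -> R) :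
  (1 <= k)%nat -> (2 * k + 8 < n)%nat -> qJL k n <= q ->
  is_global_solution k n q v dv d2v ->
  (exists f : R -> R,
     (forall t, zfun k n q v t = f (yfun k q dv t)) /\
     (forall t1 t2, yfun k q dv t1 < yfun k q dv t2 ->
        f (yfun k q dv t1) < f (yfun k q dv t2))) /\
  lim_pinfty (yfun k q dv) ((q - INR k) / acoef k n q * lamt k n q) /\
  lim_pinfty (zfun k n q v) (lamt k n q).
Proof.
  intros Hk Hn Hq Hsol. split; [|split].
  - apply increasing_graph.
    + exact (yfun_increasing k n q v dv d2v Hk Hn Hq Hsol).
    + exact (zfun_increasing k n q v dv d2v Hk Hn Hq Hsol).
  - rewrite (O2_first_coordinate k n q Hk Hn Hq).
    exact (yfun_lim k n q v dv d2v Hk Hn Hq Hsol).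
  - exact (zfun_lim k n q v dv d2v Hk Hn Hq Hsol).
Qed.
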